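(* Let $(W_i',X_i',Y_i)'$, $i=1,2,\ldots$, be i.i.d. draws from a population $F_{W,X,Y}$, where $W$ is a $J\times 1$ vector of controls with support $\mathbb{W}$, $X$ is a $K\times1$ vector of policy variables, and $Y$ is a scalar outcome, with $\mathbb{E}[Y^2\mid W=w]<\infty$ and $\mathbb{E}[\|X\|^2\mid W=w]<\infty$ for all $w\in\mathbb{W}$. Let $e_0(w)=\mathbb{E}[X\mid W=w]$ and $v_0(w)=\mathbb{V}(X\mid W=w)$, and assume (overlap) that there is $\kappa>0$ with $t'v_0(w)t\geq\kappa$ for all $w\in\mathbb{W}$ and all column vectors $t$ with $\|t\|=1$. Define $b_0(w)=v_0(w)^{-1}\mathbb{C}(X,Y\mid W=w)$ and $\beta_0=\mathbb{E}[b_0(W)]$. Suppose each unit has a potential response function $Y(x)=A+x'B$, where $A$ is a scalar and $B$ a $K\times1$ vector of unit-specific random coefficients, and the observed outcome is $Y=Y(X)$. Suppose further (conditional exogeneity) that for all $w\in\mathbb{W}$ and all $k,l=1,\ldots,K$, $$\mathbb{C}(A,X_k\mid W=w)=\mathbb{C}(B,X_k\mid W=w)=\mathbb{C}(B,X_kX_l\mid W=w)=0.$$ Then $\beta_0=\mathbb{E}[B]$.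
   Context: $\mathbb{C}(\cdot,\cdot\mid W=w)$ denotes conditional covariance and $\mathbb{V}(\cdot\mid W=w)$ conditional variance given $W=w$. *)

From HB Require Import structures.
From mathcomp Require Import all_boot all_order all_algebra.
From mathcomp Require Import all_classical all_reals all_analysis.
Set Implicit Arguments. Unset Strict Implicit. Unset Printing Implicit Defensive.
Import Order.TTheory GRing.Theory Num.Theory.
Local Open Scope ring_scope.

(* The population is described by the law muW of the controls W (on a
   measurable space TW) together with a regular conditional distribution
   (probability kernel) kap : w |-> law of the unit's characteristics
   omega = (A, B, X) given W = w, living on a measurable space T. *)

Section Defs.
Context {R : realType} {dW dT : measure_display}
  {TW : measurableType dW} {T : measurableType dT}.

Definition condE (kap : R.-pker TW ~> T) (w : TW) (f : T -> R) : R :=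
  \int[kap w]_t f t.

Definition condCov (kap : R.-pker TW ~> T) (w : TW) (f g : T -> R) : R :=
  condE kap w (fun t => f t * g t) - condE kap w f * condE kap w g.

Definition e0 (kap : R.-pker TW ~> T) {K : nat} (X : 'I_K -> T -> R) (w : TW)
  : 'cV[R]_K := \col_k condE kap w (X k).

Definition v0 (kap : R.-pker TW ~> T) {K : nat} (X : 'I_K -> T -> R) (w : TW)
  : 'M[R]_K := \matrix_(k, l) condCov kap w (X k) (X l).

Definition Yobs {K : nat} (A : T -> R) (B X : 'I_K -> T -> R) (t : T) : R :=
  A t + \sum_(k < K) X k t * B k t.

Definition b0 (kap : R.-pker TW ~> T) {K : nat} (A : T -> R)
  (B X : 'I_K -> T -> R) (w : TW) : 'cV[R]_K :=
  invmx (v0 kap X w) *m \col_k condCov kap w (X k) (Yobs A B X).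

Definition beta0 (muW : probability TW R) (kap : R.-pker TW ~> T) {K : nat}
  (A : T -> R) (B X : 'I_K -> T -> R) : 'cV[R]_K :=
  \col_k \int[muW]_w (b0 kap A B X w k 0).

(* expectation under the joint law of (W, omega): E[f] = E[ E[f | W] ] *)
Definition jointE (muW : probability TW R) (kap : R.-pker TW ~> T)
  (f : T -> R) : R := \int[muW]_w condE kap w f.

Definition EB (muW : probability TW R) (kap : R.-pker TW ~> T) {K : nat}
  (B : 'I_K -> T -> R) : 'cV[R]_K := \col_k jointE muW kap (B k).

Definition joint_integrable (muW : probability TW R) (kap : R.-pker TW ~> T)
  (f : T -> R) : Prop :=
  measurable_fun setT f /\
  (\int[muW]_w \int[kap w]_t (`|f t|%:E) < +oo)%E.

End Defs.

(** Fix w in the support of W. Writing Y = A + sum_l X_l B_l, conditional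
   exogeneity makes A uncorrelated with every X_k and lets E[B_l | W = w]
   factor out of C(X_k, X_l B_l | W = w), so that
   C(X_k, Y | W = w) = sum_l v0(w)_kl E[B_l | W = w].  Overlap makes v0(w)
   invertible, hence b0(w) = E[B | W = w] for almost every w, and integrating
   over W gives beta0 = E[B]. *)

From HB Require Import structures.
From mathcomp Require Import all_boot all_order all_algebra.
From mathcomp Require Import all_classical all_reals all_analysis.
From mathcomp Require Import measurable_realfun ring.
Import Order.TTheory GRing.Theory Num.Theory.
Local Open Scope ring_scope.
Local Open Scope classical_set_scope.

Section integral_conull.
Context {R : realType} {d : measure_display} {T : measurableType d}.
Context {mu : {measure set T -> \bar R}} {S : set T}.
Hypotheses (mS : measurable S) (muSC : mu (~` S) = 0%E).
Local Open Scope ereal_scope.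
Import HBNNSimple.

(* No measurability of F and G is assumed: every simple function below F
   is replaced by its restriction to S, which has the same integral. *)
Lemma ge0_le_integral_conull (F G : T -> \bar R) :
  (forall x, 0 <= F x) -> (forall x, 0 <= G x) ->
  {in S, forall x, F x <= G x} ->
  \int[mu]_x F x <= \int[mu]_x G x.
Proof.
move=> F0 G0 FG; rewrite !ge0_integralTE//.
apply: ge_ereal_sup => _ [h /= hF <-].
have -> : sintegral mu h = sintegral mu (proj_nnsfun h mS).
  rewrite -mrestrict -integral_nnsfun//.
  transitivity (\int[mu]_(x in setT) (h x)%:E).
    by rewrite integral_nnsfun// patch_setT.
  rewrite (ge0_negligible_integral (N := ~` S))//.
  - by rewrite setTD setCK.
  - exact: measurableC.
  - by apply/measurable_EFinP; exact: measurable_funPT.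
  - by move=> x _; rewrite lee_fin.
apply: ereal_sup_ubound => /=; exists (proj_nnsfun h mS) => //= x.
rewrite mindicE /=; case: (boolP (x \in S)) => xS.
  by rewrite mulr1; exact: le_trans (hF x) (FG _ xS).
by rewrite mulr0.
Qed.

Lemma eq_integral_conull (f g : T -> \bar R) :
  {in S, f =1 g} -> \int[mu]_x f x = \int[mu]_x g x.
Proof.
move=> fg; rewrite integralE [RHS]integralE; congr (_ - _);
  apply/le_anti/andP; split; apply: ge0_le_integral_conull => // x Sx;
  by rewrite ?funeposE ?funenegE fg.
Qed.

End integral_conull.

Lemma eq_Rintegral_conull {R : realType} {d : measure_display}
    {T : measurableType d} (mu : {measure set T -> \bar R}) (S : set T)
    (f g : T -> R) :
  measurable S -> mu (~` S) = 0%E -> {in S, f =1 g} ->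
  \int[mu]_x f x = \int[mu]_x g x.
Proof.
move=> mS muSC fg; congr fine; apply: (eq_integral_conull mS muSC) => x Sx.
by rewrite /= fg.
Qed.

Section Rintegral_sum.
Context {R : realType} {d : measure_display} {T : measurableType d}.
Context {mu : {measure set T -> \bar R}} {D : set T} {I : Type}.
Context {f : I -> T -> R}.
Hypotheses (mD : measurable D) (intf : forall i, mu.-integrable D (EFin \o f i)).

Lemma integrable_Rsum (s : seq I) :
  mu.-integrable D (EFin \o (fun x => \sum_(i <- s) f i x)).
Proof.
rewrite (_ : _ \o _ = (fun x => \sum_(i <- s) (f i x)%:E)%E).
  exact: integrable_sum (fun i _ => intf i).
by apply/funext => x /=; rewrite sumEFin.
Qed.

Lemma Rintegral_sum (s : seq I) :
  \int[mu]_(x in D) (\sum_(i <- s) f i x) =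
  \sum_(i <- s) \int[mu]_(x in D) f i x.
Proof.
elim: s => [|i s IHs].
  by under eq_Rintegral do rewrite big_nil; rewrite big_nil Rintegral_cst// mul0r.
under eq_Rintegral do rewrite big_cons.
by rewrite RintegralD// ?IHs ?big_cons//; exact: integrable_Rsum.
Qed.

End Rintegral_sum.

Lemma coercive_unitmx (R : rcfType) (n : nat) (M : 'M[R]_n) (c : R) :
  0 < c -> (forall t : 'cV_n, \sum_(k < n) t k 0 ^+ 2 = 1 ->
                                c <= (t^T *m M *m t) 0 0) ->
  M \in unitmx.
Proof.
move=> c0 coerM; rewrite unitmxE unitfE; apply/negP => /det0P [v v0 vM0].
set s := \sum_(k < n) v 0 k ^+ 2.
have s_gt0 : 0 < s.
  rewrite lt0r sumr_ge0 ?andbT => [|k _]; last exact: sqr_ge0.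
  apply: contra v0 => /eqP /psumr_eq0P v0k.
  apply/eqP/matrixP => i j; rewrite (ord1 i) mxE; apply/eqP.
  by rewrite -sqrf_eq0 v0k // => ? _; exact: sqr_ge0.
pose t := (Num.sqrt s)^-1 *: v^T.
have tT : t^T = (Num.sqrt s)^-1 *: v by apply/matrixP => i j; rewrite !mxE.
have : c <= (t^T *m M *m t) 0 0.
  apply: coerM; under eq_bigr do rewrite !mxE exprMn.
  by rewrite -mulr_sumr exprVn sqr_sqrtr ?ltW // mulVf ?gt_eqF.
by rewrite tT -scalemxAl vM0 scaler0 mul0mx mxE leNgt c0.
Qed.

Section conditional_covariance.
Context {R : realType} {dW dT : measure_display}
  {TW : measurableType dW} {T : measurableType dT}.
Variables (kap : R.-pker TW ~> T) (w : TW).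

Local Notation integrable f := ((kap w).-integrable setT (EFin \o f)).

Lemma condCovC (f g : T -> R) : condCov kap w f g = condCov kap w g f.
Proof.
by rewrite /condCov /condE [X in _ - X]mulrC; under eq_Rintegral do rewrite mulrC.
Qed.

Lemma condCovDr (f g h : T -> R) :
  integrable g -> integrable h ->
  integrable (fun t => f t * g t) -> integrable (fun t => f t * h t) ->
  condCov kap w f (fun t => g t + h t) = condCov kap w f g + condCov kap w f h.
Proof.
move=> ig ih ifg ifh; rewrite /condCov /condE.
under eq_Rintegral do rewrite mulrDr.
rewrite !RintegralD//; ring.
Qed.

Lemma condCov_sumr (I : Type) (s : seq I) (f : T -> R) (g : I -> T -> R) :
  (forall i, integrable (g i)) -> (forall i, integrable (fun t => f t * g i t)) ->
  condCov kap w f (fun t => \sum_(i <- s) g i t) =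
  \sum_(i <- s) condCov kap w f (g i).
Proof.
move=> ig ifg; rewrite /condCov /condE.
under eq_Rintegral do rewrite mulr_sumr.
by rewrite !Rintegral_sum// mulr_sumr -sumrB.
Qed.

Lemma condCov_mulr_uncorrelated (f g h : T -> R) :
  condCov kap w h (fun t => f t * g t) = 0 -> condCov kap w h g = 0 ->
  condCov kap w f (fun t => g t * h t) =
  condCov kap w f g * condE kap w h.
Proof.
rewrite /condCov => /eqP; rewrite subr_eq0 => /eqP hfg /eqP; rewrite subr_eq0.
move=> /eqP hg; rewrite /condE in hfg hg *.
under eq_Rintegral do rewrite mulrA mulrC.
under [X in _ - _ * X]eq_Rintegral do rewrite mulrC.
rewrite hfg hg; ring.
Qed.

End conditional_covariance.

Section linear_outcome.
Context {R : realType} {dW dT : measure_display}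
  {TW : measurableType dW} {T : measurableType dT}.
Variables (kap : R.-pker TW ~> T) (w : TW) (K : nat).
Variables (A : T -> R) (B X : 'I_K -> T -> R).

Local Notation integrable f := ((kap w).-integrable setT (EFin \o f)).

Hypotheses (intA : integrable A)
  (intAX : forall k, integrable (fun t => A t * X k t))
  (intBX : forall l k, integrable (fun t => B l t * X k t))
  (intBXX : forall l k m, integrable (fun t => B l t * (X k t * X m t))).

Hypothesis exogeneity : forall k l m,
  condCov kap w A (X k) = 0 /\
  condCov kap w (B l) (X k) = 0 /\
  condCov kap w (B l) (fun t => X k t * X m t) = 0.

Lemma condCov_Yobs (k : 'I_K) :
  condCov kap w (X k) (Yobs A B X) =
  \sum_(l < K) condCov kap w (X k) (X l) * condE kap w (B l).
Proof.
have intXB l : integrable (fun t => X l t * B l t).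
  apply: eq_integrable measurableT _ _ _ (intBX l l) => t _ /=.
  by rewrite mulrC.
have intXXB l : integrable (fun t => X k t * (X l t * B l t)).
  apply: eq_integrable measurableT _ _ _ (intBXX l k l) => t _ /=.
  by rewrite mulrC mulrA.
rewrite /Yobs condCovDr //; last first.
- apply: eq_integrable measurableT _ _ _ (integrable_Rsum measurableT intXXB _).
  by move=> t _ /=; rewrite mulr_sumr.
- apply: eq_integrable measurableT _ _ _ (intAX k) => t _ /=.
  by rewrite mulrC.
- exact: integrable_Rsum.
have [condCovAX _] := exogeneity k k k.
rewrite condCovC condCovAX add0r condCov_sumr //.
apply: eq_bigr => l _.
have [_ [condCovBX _]] := exogeneity l l l.
have [_ [_ condCovBXX]] := exogeneity k l l.
exact: condCov_mulr_uncorrelated.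
Qed.

Lemma b0_eq_condE : v0 kap X w \in unitmx ->
  b0 kap A B X w = \col_l condE kap w (B l).
Proof.
move=> v0_unit; rewrite /b0.
suff -> : \col_k condCov kap w (X k) (Yobs A B X) =
          v0 kap X w *m \col_l condE kap w (B l) by rewrite mulKmx.
apply/matrixP => k j; rewrite !mxE condCov_Yobs.
by apply: eq_bigr => l _; rewrite !mxE.
Qed.

End linear_outcome.

Theorem proposition1 (R : realType) (dW dT : measure_display)
  (TW : measurableType dW) (T : measurableType dT)
  (muW : probability TW R) (kap : R.-pker TW ~> T)
  (Wsupp : set TW) (K : nat)
  (A : T -> R) (B X : 'I_K -> T -> R) (c : R) :
  (* W lies in Wsupp almost surely *)
  measurable Wsupp -> muW Wsupp = 1%E ->
  (* the unit characteristics are random variables *)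
  measurable_fun setT A ->
  (forall k, measurable_fun setT (B k)) ->
  (forall k, measurable_fun setT (X k)) ->
  (* E[Y^2 | W = w] < oo and E[||X||^2 | W = w] < oo *)
  (forall w, Wsupp w ->
     (kap w).-integrable setT (fun t => ((Yobs A B X t) ^+ 2)%:E)) ->
  (forall w, Wsupp w -> forall k,
     (kap w).-integrable setT (fun t => ((X k t) ^+ 2)%:E)) ->
  (* overlap *)
  0 < c ->
  (forall w, Wsupp w -> forall t : 'cV[R]_K, \sum_(k < K) t k 0 ^+ 2 = 1 ->
     c <= (t^T *m v0 kap X w *m t) 0 0) ->
  (* the conditional covariances below are well defined (finite) *)
  (forall w, Wsupp w ->
     (kap w).-integrable setT (fun t => (A t)%:E) /\
     (forall k, (kap w).-integrable setT (fun t => (A t * X k t)%:E)) /\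
     (forall l, (kap w).-integrable setT (fun t => (B l t)%:E)) /\
     (forall l k, (kap w).-integrable setT (fun t => (B l t * X k t)%:E)) /\
     (forall l k m,
        (kap w).-integrable setT (fun t => (B l t * (X k t * X m t))%:E))) ->
  (* conditional exogeneity *)
  (forall w, Wsupp w -> forall k l m,
     condCov kap w A (X k) = 0 /\
     condCov kap w (B l) (X k) = 0 /\
     condCov kap w (B l) (fun t => X k t * X m t) = 0) ->
  (* E[B] exists *)
  (forall l, joint_integrable muW kap (B l)) ->
  beta0 muW kap A B X = EB muW kap B.
Proof.
move=> mWsupp Wsupp1 _ _ _ _ _ c_gt0 overlap integrability exogeneity _.
have WsuppC0 : muW (~` Wsupp) = 0%E by rewrite probability_setC // Wsupp1 subee.
have b0E w : Wsupp w -> b0 kap A B X w = \col_l condE kap w (B l).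
  move=> Ww; have [iA [iAX [_ [iBX iBXX]]]] := integrability w Ww.
  apply: b0_eq_condE iA iAX iBX iBXX (exogeneity w Ww) _.
  exact: coercive_unitmx c_gt0 (overlap w Ww).
apply/matrixP => k j; rewrite !mxE /jointE.
apply: eq_Rintegral_conull mWsupp WsuppC0 _ => w /[!inE] Ww.
by rewrite b0E // mxE.
Qed.
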